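(* Let $\mathcal H$ be a separable complex Hilbert space, $A\in L(\mathcal H)^+$ and $\mathcal S$ a closed subspace of $\mathcal H$. The pair $(A,\mathcal S)$ is compatible if and only if there exists an $A$-projection into $\mathcal S$.
   Context: $(A,\mathcal S)$ is compatible if there exists $Q\in L(\mathcal H)$ with $Q^2=Q$, $R(Q)=\mathcal S$ and $AQ=Q^*A$. With $\|z\|_A=\langle Az,z\rangle^{1/2}$, an $A$-projection into $\mathcal S$ is an operator $T\in L(\mathcal H)$ with $R(T)\subseteq\mathcal S$ and $\|y-Ty\|_A\le\|y-s\|_A$ for all $y\in\mathcal H$, $s\in\mathcal S$. *)

From HB Require Import structures.
From mathcomp Require Import all_boot all_order all_algebra.
From mathcomp Require Import reals complex.
Set Implicit Arguments. Unset Strict Implicit. Unset Printing Implicit Defensive.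
Import Order.TTheory GRing.Theory Num.Theory.
Local Open Scope ring_scope.

Section Hilbert.
Variables (R : realType) (H : lmodType R[i]) (ip : H -> H -> R[i]).

(* ip is a complex inner product: linear in the first argument,
   conjugate symmetric, positive definite (0 <= z in R[i] means z real >= 0) *)
Definition inner_product : Prop :=
  [/\ forall (a : R[i]) (x y z : H), ip (a *: x + y) z = a * ip x z + ip y z,
      forall x y : H, ip y x = (ip x y)^*,
      forall x : H, 0 <= ip x x
    & forall x : H, ip x x = 0 -> x = 0].

Definition hnorm (x : H) : R := Num.sqrt (complex.Re (ip x x)).

Definition seq_cvg_to (u : nat -> H) (x : H) : Prop :=
  forall e : R, 0 < e -> exists N : nat, forall n : nat, (N <= n)%N -> hnorm (u n - x) < e.

Definition cauchy_seq (u : nat -> H) : Prop :=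
  forall e : R, 0 < e -> exists N : nat, forall m n : nat,
    (N <= m)%N -> (N <= n)%N -> hnorm (u m - u n) < e.

Definition complete_space : Prop :=
  forall u : nat -> H, cauchy_seq u -> exists x : H, seq_cvg_to u x.

(* separable: there is a countable dense subset (H is nonempty, so a dense
   sequence) *)
Definition separable_space : Prop :=
  exists d : nat -> H, forall (x : H) (e : R), 0 < e -> exists n : nat, hnorm (x - d n) < e.

Definition separable_hilbert_space : Prop :=
  [/\ inner_product, complete_space & separable_space].

Definition bounded_op (T : H -> H) : Prop :=
  (forall (a : R[i]) (x y : H), T (a *: x + y) = a *: T x + T y) /\
  exists M : R, forall x : H, hnorm (T x) <= M * hnorm x.

Definition positive_op (A : H -> H) : Prop :=
  bounded_op A /\ forall x : H, 0 <= ip (A x) x.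

Definition closed_subspace (S : H -> Prop) : Prop :=
  [/\ S 0,
      forall x y, S x -> S y -> S (x + y),
      forall (a : R[i]) x, S x -> S (a *: x)
    & forall (u : nat -> H) (x : H), (forall n, S (u n)) -> seq_cvg_to u x -> S x].

Definition is_adjoint (T Ts : H -> H) : Prop :=
  forall x y : H, ip (T x) y = ip x (Ts y).

Definition compatible (A : H -> H) (S : H -> Prop) : Prop :=
  exists Q : H -> H,
    [/\ bounded_op Q,
        forall x, Q (Q x) = Q x,
        forall y, S y <-> exists x, Q x = y
      & exists Qs : H -> H,
          [/\ bounded_op Qs, is_adjoint Q Qs & forall x, A (Q x) = Qs (A x)]].

Definition A_seminorm (A : H -> H) (z : H) : R := Num.sqrt (complex.Re (ip (A z) z)).

Definition A_projection (A : H -> H) (S : H -> Prop) (T : H -> H) : Prop :=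
  [/\ bounded_op T,
      forall y, S (T y)
    & forall y s, S s -> A_seminorm A (y - T y) <= A_seminorm A (y - s)].

End Hilbert.

(* If Q is an idempotent onto S with AQ = Q*A, then for every y and every s in
   S the vectors y - Qy and Qy - s are A-orthogonal, so Pythagoras for the
   A-seminorm makes Q an A-projection.
   Conversely, if T is an A-projection, minimality of ||y - Ty||_A along the
   lines Ty + cS forces y - Ty to be A-orthogonal to S.  T need not fix S, but
   s - Ts lies in the closed subspace N = S /\ (AS)^perp, so correcting T by the
   orthogonal projection P onto N gives Q = T + P(I - T), a bounded idempotent
   onto S with y - Qy A-orthogonal to S.  Then <Az, Qx> = <AQz, Qx> = <Qz, Ax>,
   i.e. AQ = Q*A, where Q* exists by the Riesz representation theorem. *)
From mathcomp Require Import all_boot all_order all_algebra.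
From mathcomp Require Import reals complex.
From mathcomp Require Import ring lra.
From mathcomp Require Import boolp classical_sets.
Import Order.TTheory GRing.Theory Num.Theory.
Set Implicit Arguments. Unset Strict Implicit.
Local Open Scope complex_scope.
Local Open Scope ring_scope.

Section RealComplex.
Variable R : realType.
Implicit Types (z w : R[i]) (r : R).

Lemma ge0_ReC z : 0 <= z -> (complex.Re z)%:C = z.
Proof. by move=> z0; apply: (@RRe_real R); exact: ger0_real. Qed.

Lemma conjC_ge0 z : 0 <= z -> z^*%R = z.
Proof. by move=> /ger0_real/conj_Creal. Qed.

Lemma realC_ge0 r : (0 <= r%:C) = (0 <= r).
Proof. by rewrite -lecR. Qed.

Lemma ler_sqrt_Re z w :
  0 <= z -> z <= w -> Num.sqrt (complex.Re z) <= Num.sqrt (complex.Re w).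
Proof.
move=> z0 zw; have w0 := le_trans z0 zw.
by rewrite ler_sqrt -?realC_ge0 ?ge0_ReC // -lecR !ge0_ReC.
Qed.

Lemma sqrt_Re_le z w :
  0 <= w -> Num.sqrt (complex.Re z) <= Num.sqrt (complex.Re w) -> complex.Re z <= complex.Re w.
Proof. by move=> w0; rewrite ler_sqrt // -realC_ge0 ge0_ReC. Qed.

Definition absc z : R := complex.Re `|z|.

Lemma normcE z : `|z| = (absc z)%:C.
Proof. by rewrite ge0_ReC. Qed.

Lemma absc_ge0 z : 0 <= absc z.
Proof. by rewrite -realC_ge0 -normcE. Qed.

Lemma absc_eq0 z : absc z = 0 -> z = 0.
Proof. by move=> z0; apply/eqP; rewrite -normr_eq0 normcE z0. Qed.

Lemma Re_le_absc z : complex.Re z <= absc z.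
Proof.
rewrite /absc normc_def /=; apply: (le_trans (ler_norm _)).
by rewrite -sqrtr_sqr ler_sqrt ?addr_ge0 ?sqr_ge0 // lerDl sqr_ge0.
Qed.

Lemma addcJ_le_norm z : z + z^*%R <= 2 * `|z|.
Proof. by rewrite addcJ ler_pM2l ?ltr0n // normcE lecR Re_le_absc. Qed.

Lemma inv_succ_lt (eta : R) : 0 < eta ->
  exists N, forall n, (N <= n)%N -> n.+1%:R^-1 < eta.
Proof.
move=> eta0; have eta0' : 0 <= eta^-1 by rewrite invr_ge0 ltW.
exists (Num.Def.archi_bound eta^-1) => n hn.
rewrite -[eta]invrK ltf_pV2 ?posrE ?invr_gt0 ?ltr0n //.
apply: (lt_le_trans (archi_boundP eta0')).
by rewrite ler_nat (leq_trans hn).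
Qed.

End RealComplex.

Section Linear.
Variables (K : pzRingType) (U V : lmodType K) (f : U -> V).
Hypothesis f_lin : forall a x y, f (a *: x + y) = a *: f x + f y.

Lemma linf0 : f 0 = 0.
Proof.
by have := f_lin 1 0 0; rewrite scaler0 addr0 scale1r -{1}[f 0]addr0 => /addrI.
Qed.

Lemma linfD x y : f (x + y) = f x + f y.
Proof. by have := f_lin 1 x y; rewrite !scale1r. Qed.

Lemma linfZ a x : f (a *: x) = a *: f x.
Proof. by rewrite -[a *: x]addr0 f_lin linf0 addr0. Qed.

Lemma linfB x y : f (x - y) = f x - f y.
Proof. by rewrite linfD -scaleN1r linfZ scaleN1r. Qed.

End Linear.

Section Sesquilinear.
Variables (R : realType) (H : lmodType R[i]) (B : H -> H -> R[i]).
Hypothesis B_linl : forall a x y z, B (a *: x + y) z = a * B x z + B y z.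
Hypothesis B_hermitian : forall x y, B y x = (B x y)^*%R.
Hypothesis B_ge0 : forall x, 0 <= B x x.

Local Notation B_linl_at z := (fun a x y => B_linl a x y z).

Lemma formDl x y z : B (x + y) z = B x z + B y z.
Proof. exact: (linfD (V := R[i]^o) (B_linl_at z)). Qed.

Lemma formZl a x z : B (a *: x) z = a * B x z.
Proof. exact: (linfZ (V := R[i]^o) (B_linl_at z)). Qed.

Lemma formBl x y z : B (x - y) z = B x z - B y z.
Proof. exact: (linfB (V := R[i]^o) (B_linl_at z)). Qed.

Lemma form0r x : B x 0 = 0.
Proof. by rewrite B_hermitian (linf0 (V := R[i]^o) (B_linl_at x)) conjC0. Qed.

Lemma formDr x y z : B x (y + z) = B x y + B x z.
Proof. by rewrite B_hermitian formDl rmorphD /= -!B_hermitian. Qed.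

Lemma formZr a x z : B x (a *: z) = a^*%R * B x z.
Proof. by rewrite B_hermitian formZl rmorphM /= -B_hermitian. Qed.

Lemma formBr x y z : B x (y - z) = B x y - B x z.
Proof. by rewrite B_hermitian formBl rmorphB /= -!B_hermitian. Qed.

Lemma form_subZ (z m : H) (c : R[i]) :
  B (z - c *: m) (z - c *: m) =
  B z z - c^*%R * B z m - c * (B z m)^*%R + c * c^*%R * B m m.
Proof.
rewrite formBl !formBr !formZl !formZr (B_hermitian z m).
move: (B z z) (B z m) (B m m) => p q r; ring.
Qed.

(* The variation along m at c = t * B z m with t = (1 + B m m)^-1 is
   t * |B z m|^2 * (t * B m m - 2), which is negative unless B z m = 0. *)
Lemma form_orth_of_min (z m : H) :
  (forall c, complex.Re (B z z) <= complex.Re (B (z - c *: m) (z - c *: m))) ->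
  B z m = 0.
Proof.
move=> zmin; set b := B z m; set a := B m m.
have a0 : 0 <= a by exact: B_ge0.
set t : R[i] := (1 + a)^-1.
have t0 : 0 < t by rewrite invr_gt0 ltr_wpDr.
have ta : t * a < 1 by rewrite mulrC ltr_pdivrMr ?ltr_wpDr // mul1r ltrDr ltr01.
have := zmin (t * b); have Y0 := B_ge0 (z - (t * b) *: m).
rewrite form_subZ -/a -/b rmorphM /= (conjC_ge0 (ltW t0)) in Y0 *.
set X := B z z; set Y := (X - _ - _ + _) in Y0 *.
rewrite -lecR !ge0_ReC ?B_ge0 // -subr_ge0 => XY.
have YX : Y - X = t * (b * b^*%R) * (t * a - 2) by rewrite /Y; ring.
have ta2 : t * a - 2 < 0 by rewrite subr_lt0 (lt_trans ta) // ltr1n.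
have bb0 : 0 <= b * b^*%R by rewrite -normCK exprn_ge0.
have YX0 : Y - X <= 0.
  by rewrite YX; apply: mulr_ge0_le0 (mulr_ge0 (ltW t0) bb0) (ltW ta2).
have /eqP : Y - X = 0 by apply/eqP; rewrite eq_le YX0 XY.
by rewrite YX !mulf_eq0 (gt_eqF t0) (lt_eqF ta2) /= orbF conjC_eq0 orbb => /eqP.
Qed.

End Sesquilinear.

Section InnerProduct.
Variables (R : realType) (H : lmodType R[i]) (ip : H -> H -> R[i]).
Hypothesis hip : inner_product ip.

Lemma ip_linl (a : R[i]) (x y z : H) : ip (a *: x + y) z = a * ip x z + ip y z.
Proof. by case: hip. Qed.

Lemma ip_hermitian (x y : H) : ip y x = (ip x y)^*%R.
Proof. by case: hip. Qed.

Lemma ip_ge0 (x : H) : 0 <= ip x x.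
Proof. by case: hip. Qed.

Lemma ip_eq0 (x : H) : ip x x = 0 -> x = 0.
Proof. by case: hip => _ _ _; apply. Qed.

Lemma ipDl x y z : ip (x + y) z = ip x z + ip y z.
Proof. exact: (formDl ip_linl x y z). Qed.

Lemma ipZl a x z : ip (a *: x) z = a * ip x z.
Proof. exact: (formZl ip_linl a x z). Qed.

Lemma ipBl x y z : ip (x - y) z = ip x z - ip y z.
Proof. exact: (formBl ip_linl x y z). Qed.

Lemma ip0r x : ip x 0 = 0.
Proof. exact: (form0r ip_linl ip_hermitian x). Qed.

Lemma ipDr x y z : ip x (y + z) = ip x y + ip x z.
Proof. exact: (formDr ip_linl ip_hermitian x y z). Qed.

Lemma ipZr a x z : ip x (a *: z) = a^*%R * ip x z.
Proof. exact: (formZr ip_linl ip_hermitian a x z). Qed.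

Lemma ipBr x y z : ip x (y - z) = ip x y - ip x z.
Proof. exact: (formBr ip_linl ip_hermitian x y z). Qed.

Lemma ip_extr a b : (forall x, ip x a = ip x b) -> a = b.
Proof.
by move=> eq_ab; apply/eqP; rewrite -subr_eq0; apply/eqP/ip_eq0; rewrite ipBr eq_ab subrr.
Qed.

Definition sqnorm (x : H) : R := complex.Re (ip x x).

Lemma ipxx x : ip x x = (sqnorm x)%:C.
Proof. by rewrite ge0_ReC ?ip_ge0. Qed.

Lemma sqnorm_ge0 x : 0 <= sqnorm x.
Proof. by rewrite -realC_ge0 -ipxx ip_ge0. Qed.

Lemma hnorm_ge0 x : 0 <= hnorm ip x.
Proof. exact: sqrtr_ge0. Qed.

Lemma hnorm_sqr x : hnorm ip x ^+ 2 = sqnorm x.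
Proof. by rewrite sqr_sqrtr // sqnorm_ge0. Qed.

Lemma sqnormBC x y : sqnorm (x - y) = sqnorm (y - x).
Proof. by rewrite /sqnorm !ipBl !ipBr; congr complex.Re; ring. Qed.

Lemma hnormBC x y : hnorm ip (x - y) = hnorm ip (y - x).
Proof. by rewrite /hnorm -/(sqnorm _) sqnormBC. Qed.

Lemma hnormN x : hnorm ip (- x) = hnorm ip x.
Proof. by rewrite -sub0r hnormBC subr0. Qed.

Lemma cauchy_schwarz x y : absc (ip x y) <= hnorm ip x * hnorm ip y.
Proof.
have [y0|yn0] := eqVneq (ip y y) 0.
  by rewrite (ip_eq0 y0) ip0r /absc normr0 mulr_ge0 ?hnorm_ge0.
set p := ip x y; set w := ip y y.
have w0 : 0 < w by rewrite lt_def yn0 ip_ge0.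
have := ip_ge0 (x - (p / w) *: y).
rewrite (form_subZ ip_linl ip_hermitian) -/p -/w.
rewrite rmorphM /= fmorphV /= (conjC_ge0 (ltW w0)).
have -> : ip x x - p^*%R / w * p - p / w * p^*%R + p / w * (p^*%R / w) * w =
          ip x x - p * p^*%R / w by field; rewrite gt_eqF.
rewrite subr_ge0 ler_pdivrMr // => pp.
rewrite -(ler_pXn2r (_ : 0 < 2)%N) ?nnegrE ?absc_ge0 ?mulr_ge0 ?hnorm_ge0 //.
rewrite -lecR !rmorphXn /= -normcE normCK rmorphM exprMn -!rmorphXn.
by rewrite !hnorm_sqr /= -!ipxx.
Qed.

Lemma hnormD_le x y : hnorm ip (x + y) <= hnorm ip x + hnorm ip y.
Proof.
rewrite -(ler_pXn2r (_ : 0 < 2)%N) ?nnegrE ?addr_ge0 ?hnorm_ge0 //.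
rewrite hnorm_sqr -lecR -ipxx ipDl !ipDr (ip_hermitian x y) !ipxx.
have xy : ip x y + (ip x y)^*%R <= 2 * ((hnorm ip x)%:C * (hnorm ip y)%:C).
  rewrite (le_trans (addcJ_le_norm _)) // ler_pM2l ?ltr0n //.
  by rewrite -rmorphM normcE lecR cauchy_schwarz.
rewrite rmorphXn rmorphD /= sqrrD -!rmorphXn !hnorm_sqr /=.
move: xy; move: (ip x y) (sqnorm x)%:C (sqnorm y)%:C ((hnorm ip x)%:C * _) => q a b c.
have -> : a + q + (q^*%R + b) = a + b + (q + q^*%R) by ring.
have -> : a + c *+ 2 + b = a + b + 2 * c by ring.
by rewrite lerD2l.
Qed.

Lemma parallelogram a b : sqnorm (a + b) + sqnorm (a - b) = 2 * sqnorm a + 2 * sqnorm b.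
Proof.
apply: complexI; rewrite !rmorphD !rmorphM /= -!ipxx rmorph_nat.
rewrite ipDl ipBl !ipBr !ipDr.
move: (ip a a) (ip a b) (ip b a) (ip b b) => p q r s; ring.
Qed.

Lemma sqnormZ2 z : sqnorm (2 *: z) = 4 * sqnorm z.
Proof.
apply: complexI; rewrite rmorphM /= -!ipxx ipZl ipZr !rmorph_nat mulrA.
by rewrite -natrM.
Qed.

Lemma cvg_functional_eq0 (f : H -> R[i]) (C : R) (u : nat -> H) (x : H) :
  (forall a b, f (a - b) = f a - f b) ->
  (forall z, absc (f z) <= C * hnorm ip z) ->
  seq_cvg_to ip u x -> (forall n, f (u n) = 0) -> f x = 0.
Proof.
move=> fB fC cvx fu0; apply: absc_eq0.
have [r0|] := ltrP 0 (absc (f x)); last first.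
  by move=> fx0; apply/eqP; rewrite eq_le fx0 absc_ge0.
set C' : R := `|C| + 1.
have C'0 : 0 < C' by rewrite ltr_wpDl.
have [N hN] := cvx _ (divr_gt0 r0 C'0).
have := hN N (leqnn N).
rewrite hnormBC -(ltr_pM2l C'0) mulrCA mulfV ?gt_eqF // mulr1.
move=> lt_fx; suff : absc (f x) <= C' * hnorm ip (x - u N) by rewrite leNgt lt_fx.
have -> : f x = f (x - u N) by rewrite fB fu0 subr0.
apply: (le_trans (fC _)); rewrite ler_wpM2r ?hnorm_ge0 //.
by rewrite (le_trans (ler_norm _)) // lerDl.
Qed.

Section Positive.
Variable A : H -> H.
Hypothesis hA : positive_op ip A.

Lemma positive_op_lin (a : R[i]) (x y : H) : A (a *: x + y) = a *: A x + A y.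
Proof. by case: hA => [[]]. Qed.

Lemma positive_op_ge0 x : 0 <= ip (A x) x.
Proof. by case: hA. Qed.

(* Polarization at c = 1 and c = 'i: a hermitian quadratic form determines
   its sesquilinear form. *)
Lemma positive_op_selfadj x y : ip (A x) y = ip x (A y).
Proof.
have AxxC z : ip (A z) z = ip z (A z).
  by rewrite (ip_hermitian (A z) z) conjC_ge0 ?positive_op_ge0.
set P := ip (A x) y - ip x (A y); set Q := ip (A y) x - ip y (A x).
have PQ0 c : c^*%R * P + c * Q = 0.
  have := AxxC (x + c *: y).
  rewrite (linfD positive_op_lin) (linfZ positive_op_lin) !ipDl !ipDr !ipZl !ipZr.
  rewrite (AxxC x) (AxxC y) /P /Q => /eqP; rewrite -subr_eq0 => /eqP <-.
  by ring.
have := PQ0 1; rewrite conjC1 !mul1r => PQ.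
have := PQ0 'i; rewrite conjCi mulNr addrC -mulrBr => /eqP.
rewrite mulf_eq0 (negbTE (neq0Ci _)) subr_eq0 => /eqP QP.
by move: PQ; rewrite QP -mulr2n => /eqP; rewrite mulrn_eq0 /= subr_eq0 => /eqP.
Qed.

Lemma Aform_linl (a : R[i]) (x y z : H) :
  ip (A (a *: x + y)) z = a * ip (A x) z + ip (A y) z.
Proof. by rewrite positive_op_lin ip_linl. Qed.

Lemma Aform_hermitian x y : ip (A y) x = (ip (A x) y)^*%R.
Proof. by rewrite positive_op_selfadj ip_hermitian. Qed.

End Positive.

Section Complete.
Hypothesis hc : complete_space ip.

Section MinimizingSequence.
Variables (x : H) (d : R) (ms : nat -> H).
Hypothesis ms_approx : forall n, sqnorm (x - ms n) < d + n.+1%:R^-1.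

Lemma minimizing_seq_cauchy (M : H -> Prop) :
  (forall a b, M a -> M b -> M ((2 : R[i])^-1 *: (a + b))) ->
  (forall m, M m -> d <= sqnorm (x - m)) -> (forall n, M (ms n)) ->
  cauchy_seq ip ms.
Proof.
move=> Mmid dle Mms e e0.
have bound n k : sqnorm (ms n - ms k) <= 2 * n.+1%:R^-1 + 2 * k.+1%:R^-1.
  have := dle _ (Mmid _ _ (Mms n) (Mms k)).
  have := parallelogram (x - ms n) (x - ms k).
  have -> : (x - ms n) + (x - ms k) = 2 *: (x - (2 : R[i])^-1 *: (ms n + ms k)).
    rewrite scalerBr scalerA mulfV ?pnatr_eq0 // scale1r scaler_nat mulr2n.
    by rewrite opprD addrACA.
  have -> : (x - ms n) - (x - ms k) = ms k - ms n by rewrite opprB addrC addrA subrK.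
  rewrite sqnormZ2 (sqnormBC (ms k)).
  have := ms_approx n; have := ms_approx k.
  move: (n.+1%:R : R)^-1 (k.+1%:R : R)^-1 => a b; lra.
have e20 : 0 < e ^+ 2 / 4 by rewrite divr_gt0 ?exprn_gt0 // ltr0n.
have [N hN] := inv_succ_lt e20.
exists N => m n hm hn.
rewrite -(ltr_pXn2r (_ : 0 < 2)%N) ?nnegrE ?hnorm_ge0 ?ltW // hnorm_sqr.
have := bound m n; have := hN m hm; have := hN n hn.
move: (m.+1%:R : R)^-1 (n.+1%:R : R)^-1 (e ^+ 2) => a b E; lra.
Qed.

Lemma minimizing_seq_limit p : 0 <= d -> seq_cvg_to ip ms p -> sqnorm (x - p) <= d.
Proof.
move=> d0 cvp.
rewrite -hnorm_sqr -(sqr_sqrtr d0).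
apply: lerXn2r; rewrite ?nnegrE ?hnorm_ge0 ?sqrtr_ge0 //.
set h := Num.sqrt d; have h0 : 0 <= h := sqrtr_ge0 d.
apply/ler_addgt0Pr => g g0.
have [N1 hN1] := cvp (g / 2) (divr_gt0 g0 (ltr0Sn _ 1)).
have eta0 : 0 < h * g + g ^+ 2 / 4.
  by rewrite ltr_wpDl ?mulr_ge0 ?(ltW g0) // divr_gt0 ?exprn_gt0 // ltr0n.
have [N2 hN2] := inv_succ_lt eta0.
set n := maxn N1 N2.
have near_ms : hnorm ip (x - ms n) < h + g / 2.
  rewrite -(ltr_pXn2r (_ : 0 < 2)%N) ?nnegrE ?hnorm_ge0 ?addr_ge0 ?divr_ge0 ?(ltW g0) //.
  have -> : (h + g / 2) ^+ 2 = d + (h * g + g ^+ 2 / 4).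
    by rewrite sqrrD sqr_sqrtr // expr_div_n; field.
  by rewrite hnorm_sqr (lt_le_trans (ms_approx n)) // lerD2l ltW // hN2 ?leq_maxr.
have := hnormD_le (x - ms n) (ms n - p); rewrite addrA subrK.
have := hN1 n (leq_maxl _ _); lra.
Qed.

End MinimizingSequence.

Section Projection.
Variable M : H -> Prop.
Hypothesis hM : closed_subspace ip M.

Lemma closed_subspace_min_dist x :
  exists2 p, M p & forall m, M m -> sqnorm (x - p) <= sqnorm (x - m).
Proof.
case: hM => M0 MD MZ Mlim.
pose E : set R := fun r => exists2 m, M m & r = sqnorm (x - m).
have E0 : E (sqnorm (x - 0)) by exists 0.
have E_lb : lbound E 0 by move=> _ [m _ ->]; exact: sqnorm_ge0.
have hE : has_inf E by split; [exists (sqnorm (x - 0)) | exists 0].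
have dle m : M m -> inf E <= sqnorm (x - m) by move=> Mm; apply: (ge_inf hE.2); exists m.
have approx n : exists m, M m /\ sqnorm (x - m) < inf E + n.+1%:R^-1.
  have n0 : 0 < n.+1%:R^-1 :> R by rewrite invr_gt0 ltr0n.
  by have [_ [m Mm ->] hm] := inf_adherent n0 hE; exists m.
have [ms /all_and2 [Mms ms_approx]] := choice approx.
have Mmid a b : M a -> M b -> M ((2 : R[i])^-1 *: (a + b)).
  by move=> Ma Mb; apply/MZ/MD.
have [p cvp] := hc (minimizing_seq_cauchy ms_approx Mmid dle Mms).
exists p; first exact: Mlim cvp.
move=> m Mm; apply: (le_trans _ (dle m Mm)).
apply: minimizing_seq_limit ms_approx _ _ cvp.
exact: lb_le_inf (ex_intro _ _ E0) E_lb.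
Qed.

Lemma orth_proj_point x : exists p, M p /\ forall m, M m -> ip (x - p) m = 0.
Proof.
case: hM => _ MD MZ _; have [p Mp pmin] := closed_subspace_min_dist x.
exists p; split => // m Mm; apply: (form_orth_of_min ip_linl ip_hermitian ip_ge0) => c.
by rewrite -addrA -opprD; apply/pmin/MD => //; apply: MZ.
Qed.

Lemma orth_proj_exists : exists P : H -> H,
  [/\ forall a x y, P (a *: x + y) = a *: P x + P y,
      forall x, hnorm ip (P x) <= hnorm ip x,
      forall x, M (P x) & forall x m, M m -> ip (x - P x) m = 0].
Proof.
case: (hM) => M0 MD MZ _.
have MB a b : M a -> M b -> M (a - b).
  by move=> Ma Mb; apply: MD; rewrite // -scaleN1r; exact: MZ.
have [P /all_and2 [MP Porth]] := choice orth_proj_point.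
have P_uniq x p : M p -> (forall m, M m -> ip (x - p) m = 0) -> p = P x.
  move=> Mp porth; apply/eqP; rewrite -subr_eq0; apply/eqP/ip_eq0.
  have e : p - P x = (x - P x) - (x - p) by rewrite opprB [RHS]addrC addrA subrK.
  by rewrite {1}e ipBl Porth ?porth ?subrr //; apply: MB.
exists P; split => // [a x y|x].
  apply: esym; apply: P_uniq => [|m Mm]; first by apply: MD => //; apply: MZ.
  have -> : (a *: x + y) - (a *: P x + P y) = a *: (x - P x) + (y - P y).
    by rewrite scalerBr opprD addrACA.
  by rewrite ipDl ipZl !Porth // mulr0 addr0.
apply: ler_sqrt_Re; first exact: ip_ge0.
have o1 : ip (x - P x) (P x) = 0 by exact: Porth.
have o2 : ip (P x) (x - P x) = 0 by rewrite ip_hermitian o1 conjC0.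
have -> : ip x x = ip ((x - P x) + P x) ((x - P x) + P x) by rewrite subrK.
move: o1 o2 (ip_ge0 (x - P x)); move: (x - P x) => y o1 o2 yy.
by rewrite ipDl !ipDr o1 o2 addr0 add0r -subr_ge0 addrK.
Qed.

End Projection.

Lemma riesz (f : H -> R[i]) (C : R) :
  (forall a x y, f (a *: x + y) = a * f x + f y) ->
  (forall z, absc (f z) <= C * hnorm ip z) ->
  exists w, forall x, f x = ip x w.
Proof.
move=> f_lin fC.
have fB := linfB (V := R[i]^o) f_lin.
have hK : closed_subspace ip (fun z => f z = 0).
  split; first exact: (linf0 (V := R[i]^o) f_lin).
  - by move=> x y fx fy; rewrite (linfD (V := R[i]^o) f_lin) fx fy addr0.
  - by move=> a x fx; rewrite (linfZ (V := R[i]^o) f_lin) fx [_ *: _]mulr0.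
  - by move=> u x fu cvx; apply: cvg_functional_eq0 fB fC cvx fu.
have [[w fw]|f0] := pselect (exists w, f w != 0); last first.
  by exists 0 => x; rewrite ip0r; have [//|fx] := eqVneq (f x) 0; case: f0; exists x.
have [q [Kq qorth]] := orth_proj_point hK w.
set w0 := w - q.
have fw0 : f w0 != 0 by rewrite fB Kq subr0.
have w0n : ip w0 w0 != 0.
  by apply: contra fw0 => /eqP/ip_eq0 ->; rewrite (linf0 (V := R[i]^o) f_lin).
exists ((f w0 / ip w0 w0)^*%R *: w0) => x.
set c := f x / f w0.
have Kx : f (x - c *: w0) = 0.
  by rewrite fB (linfZ (V := R[i]^o) f_lin) [_ *: _]divfK // subrr.
have xw0 : ip x w0 = c * ip w0 w0.
  apply/eqP; rewrite -subr_eq0 -conjC_eq0 -ipZl -ipBl -ip_hermitian.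
  by apply/eqP/qorth.
by rewrite ipZr conjCK xw0 /c; field; apply/andP.
Qed.

Lemma adjoint_exists (T : H -> H) : bounded_op ip T ->
  exists2 Ts, bounded_op ip Ts & is_adjoint ip T Ts.
Proof.
case=> T_lin [M TM].
have rep y : exists w, forall x, ip (T x) y = ip x w.
  apply: (@riesz (fun x => ip (T x) y) (M * hnorm ip y)).
    by move=> a x x'; rewrite T_lin ip_linl.
  move=> z; apply: (le_trans (cauchy_schwarz _ _)).
  by rewrite mulrAC ler_wpM2r ?hnorm_ge0 ?TM.
have [Ts hTs] := choice rep.
exists Ts => //; split.
  move=> a y y'; apply: ip_extr => x.
  by rewrite -hTs ipDr ipZr ipDr ipZr -!hTs.
exists `|M| => y; set t := hnorm ip (Ts y).
have t0 : 0 <= t := hnorm_ge0 _.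
have tt : t * t <= t * (`|M| * hnorm ip y).
  rewrite -expr2 /t hnorm_sqr /sqnorm -hTs.
  apply: (le_trans (Re_le_absc _)); apply: (le_trans (cauchy_schwarz _ _)).
  rewrite mulrA [t * _]mulrC; apply: ler_wpM2r; first exact: hnorm_ge0.
  by apply: (le_trans (TM _)); apply: ler_wpM2r; [exact: hnorm_ge0 | exact: ler_norm].
have [->|tn0] := eqVneq t 0; first by rewrite mulr_ge0 ?hnorm_ge0.
by rewrite -(ler_pM2l (_ : 0 < t)) // lt_def tn0.
Qed.

Section Compatibility.
Variables (A : H -> H) (S : H -> Prop).
Hypotheses (hA : positive_op ip A) (hS : closed_subspace ip S).

Definition A_orthogonal (k : H) : Prop := forall s, S s -> ip (A s) k = 0.

Lemma A_projection_of_compatible :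
  compatible ip A S -> exists T, A_projection ip A S T.
Proof.
case=> Q [Qb QQ QR [Qs [_ Qadj AQ]]]; have Q_lin := proj1 Qb.
exists Q; split => // [y|y s Ss]; first by apply/QR; exists y.
have Qs_fix : Q s = s by have [w <-] := (QR s).1 Ss; rewrite QQ.
set u := y - Q y; set v := Q y - s.
have Qu : Q u = 0 by rewrite (linfB Q_lin) QQ subrr.
have Qv : Q v = v by rewrite (linfB Q_lin) QQ Qs_fix.
have uv : ip (A u) v = 0.
  by rewrite -Qv ip_hermitian Qadj -AQ Qu (linf0 (positive_op_lin hA)) ip0r conjC0.
have vu : ip (A v) u = 0 by rewrite (Aform_hermitian hA) uv conjC0.
have -> : y - s = u + v by rewrite addrA subrK.
clearbody u v; apply: ler_sqrt_Re; first exact: positive_op_ge0.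
rewrite (linfD (positive_op_lin hA)) !ipDl !ipDr uv vu addr0 add0r.
rewrite -subr_ge0 addrAC subrr add0r.
exact: positive_op_ge0.
Qed.

Lemma A_projection_residual T :
  A_projection ip A S T -> forall y, A_orthogonal (y - T y).
Proof.
case: hS => _ SD SZ _ [_ TS Tmin] y s Ss.
rewrite Aform_hermitian //; apply/eqP; rewrite conjC_eq0; apply/eqP.
apply: (form_orth_of_min (Aform_linl hA) (Aform_hermitian hA) (positive_op_ge0 hA)) => c.
apply: sqrt_Re_le; first exact: positive_op_ge0.
by rewrite -addrA -opprD; apply/Tmin/SD => //; apply: SZ.
Qed.

Lemma A_orthogonal_closed : closed_subspace ip (fun x => S x /\ A_orthogonal x).
Proof.
case: hS => S0 SD SZ Slim; split.
- by split=> // s _; rewrite ip0r.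
- move=> x y [Sx Kx] [Sy Ky].
  by split=> [|s Ss]; [exact: SD | rewrite ipDr Kx ?Ky ?addr0].
- by move=> a x [Sx Kx]; split=> [|s Ss]; [exact: SZ | rewrite ipZr Kx ?mulr0].
- move=> u x uN cvx; split; first by apply: Slim cvx => n; case: (uN n).
  move=> s Ss; rewrite -[LHS]conjCK -ip_hermitian.
  rewrite (@cvg_functional_eq0 (ip^~ (A s)) (hnorm ip (A s)) u x) ?conjC0 //.
  - by move=> a b; rewrite ipBl.
  - by move=> z; rewrite mulrC cauchy_schwarz.
  - by move=> n; rewrite ip_hermitian (proj2 (uN n)) ?conjC0.
Qed.

Lemma A_orth_retraction T : bounded_op ip T -> (forall y, S (T y)) ->
    (forall y, A_orthogonal (y - T y)) ->
  exists Q, [/\ bounded_op ip Q, forall y, S (Q y), forall s, S s -> Q s = s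
               & forall y, A_orthogonal (y - Q y)].
Proof.
case: hS => S0 SD SZ _ [T_lin [MT TM]] TS Tres.
have [P [P_lin PM NP Porth]] := orth_proj_exists A_orthogonal_closed.
pose Q x := T x + P (x - T x).
have Qres y : y - Q y = (y - T y) - P (y - T y) by rewrite opprD addrA.
have QresA y : A_orthogonal (y - Q y).
  by move=> s Ss; rewrite Qres ipBr Tres // (proj2 (NP _)) // subrr.
have QresN y n : S n /\ A_orthogonal n -> ip (y - Q y) n = 0.
  by rewrite Qres; apply: Porth.
have SQ y : S (Q y) by apply: SD => //; case: (NP (y - T y)).
exists Q; split => // [|s Ss].
  split=> [a x y|].
    rewrite /Q.
    have -> : (a *: x + y) - T (a *: x + y) = a *: (x - T x) + (y - T y).
      by rewrite T_lin scalerBr opprD addrACA.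
    by rewrite T_lin P_lin scalerDr addrACA.
  exists (2 * MT + 1) => x.
  have := hnormD_le (T x) (P (x - T x)); have := PM (x - T x).
  have := hnormD_le x (- T x); rewrite hnormN; have := TM x; lra.
apply/eqP; rewrite eq_sym -subr_eq0; apply/eqP/ip_eq0/QresN.
by split; [apply: SD; rewrite // -scaleN1r; exact: SZ | exact: QresA].
Qed.

Lemma compatible_of_A_orth_retraction Q :
    bounded_op ip Q -> (forall y, S (Q y)) ->
    (forall s, S s -> Q s = s) -> (forall y, A_orthogonal (y - Q y)) ->
  compatible ip A S.
Proof.
move=> Qb SQ Qfix QresA; have [Qs Qsb Qadj] := adjoint_exists Qb.
exists Q; split => // [x|y|]; first exact: Qfix.
  by split=> [Sy|[x <-] //]; exists y; apply: Qfix.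
exists Qs; split => // x; apply: ip_extr => z.
rewrite -Qadj -(positive_op_selfadj hA).
have AQres u v : ip (A (u - Q u)) (Q v) = 0.
  by rewrite Aform_hermitian // QresA ?conjC0.
have -> : ip (A z) (Q x) = ip (A (Q z)) (Q x).
  by rewrite -{1}(subrK (Q z) z) (linfD (positive_op_lin hA)) ipDl AQres add0r.
have -> : ip (Q z) (A x) = ip (A (Q z)) (x - Q x + Q x).
  by rewrite subrK (positive_op_selfadj hA).
by rewrite ipDr QresA ?add0r.
Qed.

End Compatibility.
End Complete.
End InnerProduct.

Unset Implicit Arguments.

Theorem mainTheorem6 (R : realType) (H : lmodType R[i]) (ip : H -> H -> R[i])
  (hH : separable_hilbert_space ip) (A : H -> H) (S : H -> Prop)
  (hA : positive_op ip A) (hS : closed_subspace ip S) :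
  compatible ip A S <-> exists T : H -> H, A_projection ip A S T.
Proof.
case: hH => hip hc _; split; first exact: A_projection_of_compatible.
case=> T hT; have [Tb TS _] := hT.
have [Q [Qb SQ Qfix QresA]] :=
  A_orth_retraction hip hc hS Tb TS (A_projection_residual hip hA hS hT).
exact: (compatible_of_A_orth_retraction hip hc hA Qb SQ Qfix QresA).
Qed.
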